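(* Let $\mathfrak d=\mathfrak n^-\oplus\mathfrak k\oplus\mathfrak h\oplus\mathfrak n^+$ be the Lie algebra described in the context. Define a bilinear form $(\cdot|\cdot)_{\mathfrak d}$ on $\mathfrak d$ by: for $h,h',h_\lambda\in\mathfrak h$, $x,x'\in\mathfrak n^+\oplus\mathfrak n^-$, $k,k',k_\mu\in\mathfrak k$, $(h|h')_{\mathfrak d}=2(h|h')$, $(h|x)_{\mathfrak d}=(x|h)_{\mathfrak d}=0$, $(x|x')_{\mathfrak d}=(x|x')$, $(h_\lambda|k_\mu)_{\mathfrak d}=-2u(\lambda,\mu)$, $(k_\mu|h_\lambda)_{\mathfrak d}=2u(\mu,\lambda)$, $(k|x)_{\mathfrak d}=(x|k)_{\mathfrak d}=0$, $(k|k')_{\mathfrak d}=2(\varphi^{-1}(k)|\varphi^{-1}(k'))$, where $(\cdot|\cdot)$ is the invariant form on $\mathfrak g$. Then $(\cdot|\cdot)_{\mathfrak d}$ is a symmetric bilinear form on $\mathfrak d$ which is $\mathfrak d$-invariant, i.e. $([a,b]|c)_{\mathfrak d}=(a|[b,c])_{\mathfrak d}$ for all $a,b,c\in\mathfrak d$.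
   Context: Let $C=(a_{ij})_{n\times n}$ be an indecomposable symmetrizable generalized Cartan matrix of finite type, and $D=\mathrm{diag}(d_1,\dots,d_n)$ with positive integers $d_i$ such that $DC$ is symmetric positive definite. Let $\mathfrak g$ be the finite dimensional simple complex Lie algebra (bracket $[\cdot,\cdot]_{\mathfrak g}$) associated to $C$, $\mathfrak h$ a Cartan subalgebra with simple roots $\alpha_1,\dots,\alpha_n$, and $h_i\in\mathfrak h$ with $\alpha_j(h_i)=a_{ij}$; $\mathfrak g$ is generated by $h_i,x_{\pm\alpha_i}$ with $[h_i,x_{\pm\alpha_j}]_{\mathfrak g}=\pm a_{ij}x_{\pm\alpha_j}$, $[x_{\alpha_i},x_{-\alpha_j}]_{\mathfrak g}=\delta_{ij}h_i$ and the Serre relations. Let $\mathfrak n^+$ (resp. $\mathfrak n^-$) be the span of root vectors with positive (resp. negative) roots, $\mathfrak n=\mathfrak n^-\oplus\mathfrak n^+$; $x_\alpha$ always denotes a root vector of root $\alpha$. Let $(\cdot|\cdot)$ be the symmetric bilinear form on $\mathfrak h^*$ with $(\alpha_i|\alpha_j)=d_ia_{ij}$; for $\lambda\in\mathfrak h^*$ let $h_\lambda\in\mathfrak h$ be defined by $\alpha_i(h_\lambda)=(\alpha_i|\lambda)$ for all $i$. This gives a form on $\mathfrak h$, $(h_\lambda|h_\mu)=(\lambda|\mu)=\lambda(h_\mu)$, extended to the nondegenerate $\mathfrak g$-invariant symmetric form $(\cdot|\cdot)$ on $\mathfrak g$ with $(h_i|h_j)=d_j^{-1}a_{ij}$, $(h|x_\alpha)=0$,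 $(x_\alpha|x_\beta)=0$ if $\alpha+\beta\neq0$, $(x_{\alpha_i}|x_{-\alpha_j})=d_i^{-1}\delta_{ij}$. Let $u=(u_{ij})$ be a skew symmetric complex $n\times n$ matrix, giving $u(\lambda,\mu)=\sum_{i,j}u_{ij}\lambda(h_i)\mu(h_j)$ on $\mathfrak h^*$; let $\Phi:\mathfrak h^*\to\mathfrak h^*$ be the linear map with $u(\lambda,\mu)=(\Phi\lambda|\mu)$, and $\Phi_\pm=\Phi\pm I$. Let $\mathfrak k$ be a vector space with a linear isomorphism $\varphi:\mathfrak h\to\mathfrak k$, and $k_\lambda=\varphi(h_\lambda)$. Let $\mathfrak g'=\mathfrak n^-\oplus\mathfrak k\oplus\mathfrak n^+$ be the Lie algebra (isomorphic to $\mathfrak g$) with bracket $[k_\lambda,k_\mu]_{\mathfrak g'}=0$, $[k_\lambda,x_\alpha]_{\mathfrak g'}=(\alpha|\lambda)x_\alpha$, $[x_\alpha,x_\beta]_{\mathfrak g'}=[x_\alpha,x_\beta]_{\mathfrak g}$ for $\alpha\neq-\beta$, $[x_\alpha,x_{-\alpha}]_{\mathfrak g'}=\varphi([x_\alpha,x_{-\alpha}]_{\mathfrak g})$. Then $\mathfrak d=\mathfrak n^-\oplus\mathfrak k\oplus\mathfrak h\oplus\mathfrak n^+$ is the Lie algebra with bracket: $[h_\lambda,h_\mu]=[h_\lambda,k_\mu]=[k_\lambda,k_\mu]=0$, $[h_\lambda,x_\alpha]=-(\Phi_-\lambda|\alpha)x_\alpha$, $[k_\lambda,x_\alpha]=(\Phi_+\lambda|\alpha)x_\alpha$,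 $[x_\alpha,x_\beta]=\tfrac12([x_\alpha,x_\beta]_{\mathfrak g}+[x_\alpha,x_\beta]_{\mathfrak g'})$ for all $\lambda,\mu\in\mathfrak h^*$ and root vectors $x_\alpha,x_\beta\in\mathfrak n$. *)

From HB Require Import structures.
From mathcomp Require Import all_boot all_order all_algebra.
Set Implicit Arguments. Unset Strict Implicit. Unset Printing Implicit Defensive.
Import Order.TTheory GRing.Theory Num.Theory.
Local Open Scope ring_scope.

Section Defs.
Variable n : nat.

Definition gcm (C : 'M[int]_n) : Prop :=
  (forall i, C i i = 2) /\ (forall i j, i != j -> C i j <= 0) /\
  (forall i j, C i j = 0 -> C j i = 0).

Definition indecomposable (C : 'M[int]_n) : Prop :=
  forall I : {set 'I_n},
    (forall i j, i \in I -> j \notin I -> C i j = 0) -> I = set0 \/ I = setT.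

(** D = diag(d_1..d_n), d_i positive integers, DC symmetric positive definite *)
Definition sym_posdef_symmetrizer (C : 'M[int]_n) (d : 'I_n -> nat) : Prop :=
  (forall i, (0 < d i)%N) /\
  (forall i j, (d i)%:Z * C i j = (d j)%:Z * C j i) /\
  (forall v : 'I_n -> rat, (exists i, v i != 0) ->
     0 < \sum_i \sum_j v i * ((d i)%:Z * C i j)%:~R * v j).

Variable F : numClosedFieldType.

Definition bilinear_map (U V W : lmodType F) (b : U -> V -> W) : Prop :=
  (forall r x x' y, b (r *: x + x') y = r *: b x y + b x' y) /\
  (forall r x y y', b x (r *: y + y') = r *: b x y + b x y').

Definition bilinear_form (V : lmodType F) (b : V -> V -> F) : Prop :=
  (forall r x x' y, b (r *: x + x') y = r * b x y + b x' y) /\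
  (forall r x y y', b x (r *: y + y') = r * b x y + b x y').

Definition lie_bracket (G : lmodType F) (bg : G -> G -> G) : Prop :=
  bilinear_map bg /\ (forall x, bg x x = 0) /\
  (forall x y z, bg x (bg y z) + bg y (bg z x) + bg z (bg x y) = 0).

Variable G : lmodType F.
Variable C : 'M[int]_n.
Variable bg : G -> G -> G.
Variables hh e f : 'I_n -> G.   (* h_i, x_{alpha_i}, x_{-alpha_i} *)

Definition chevalley_serre : Prop :=
  (forall i j, bg (hh i) (hh j) = 0) /\
  (forall i j, bg (hh i) (e j) = (C i j)%:~R *: e j) /\
  (forall i j, bg (hh i) (f j) = - ((C i j)%:~R *: f j)) /\
  (forall i j, bg (e i) (f j) = if i == j then hh i else 0) /\
  (forall i j, i != j -> iter (absz (1 - C i j)) (bg (e i)) (e j) = 0) /\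
  (forall i j, i != j -> iter (absz (1 - C i j)) (bg (f i)) (f j) = 0).

Definition lie_generated : Prop :=
  forall P : G -> Prop,
    P 0 -> (forall x y, P x -> P y -> P (x + y)) ->
    (forall r x, P x -> P (r *: x)) ->
    (forall x y, P x -> P y -> P (bg x y)) ->
    (forall i, P (hh i) /\ P (e i) /\ P (f i)) ->
    forall x, P x.

Definition lin_indep (v : 'I_n -> G) : Prop :=
  forall c : 'I_n -> F, \sum_i c i *: v i = 0 -> forall i, c i = 0.

Definition in_h (h : G) : Prop := exists c : 'I_n -> F, h = \sum_i c i *: hh i.

(** x is a root vector of the root alpha (alpha only matters on h) *)
Definition root_vector (x : G) (alpha : G -> F) : Prop :=
  x != 0 /\ (exists h, in_h h /\ alpha h != 0) /\
  (forall h, in_h h -> bg h x = alpha h *: x).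

(** n = n^- (+) n^+ = span of the root vectors *)
Definition in_n (x : G) : Prop :=
  exists s : seq G, (forall y, y \in s -> exists alpha, root_vector y alpha) /\
                    x = \sum_(y <- s) y.

Variable d : 'I_n -> nat.
Variable fg : G -> G -> F.

Definition g_invariant_form : Prop :=
  bilinear_form fg /\ (forall x y, fg x y = fg y x) /\
  (forall x y z, fg (bg x y) z = fg x (bg y z)) /\
  (forall i j, fg (hh i) (hh j) = (C i j)%:~R / (d j)%:R) /\
  (forall i j, fg (e i) (f j) = if i == j then ((d i)%:R)^-1 else 0).

Variable u : 'M[F]_n.

Definition skew_symmetric (M : 'M[F]_n) : Prop := forall i j, M i j = - M j i.

(** u(lambda, mu) for h = h_lambda, h' = h_mu  (lambda(h_i) = (h_lambda|h_i)) *)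
Definition uform (h h' : G) : F :=
  \sum_i \sum_j u i j * fg h (hh i) * fg h' (hh j).

(** u(lambda, alpha) for h = h_lambda and alpha a root *)
Definition uroot (h : G) (alpha : G -> F) : F :=
  \sum_i \sum_j u i j * fg h (hh i) * alpha (hh j).

Variable K : lmodType F.
Variable phi : G -> K.
Variable phiinv : K -> G.

Definition phi_iso : Prop :=
  (forall r x y, in_h x -> in_h y -> phi (r *: x + y) = r *: phi x + phi y) /\
  (forall k, in_h (phiinv k) /\ phi (phiinv k) = k) /\
  (forall h, in_h h -> phiinv (phi h) = h).

(** d = n (+) k (+) h, elements (x, k, h) *)
Definition dT := (G * K * G)%type.
Definition Nd (x : G) : dT := (x, 0, 0).
Definition Kd (k : K) : dT := (0, k, 0).
Definition Hd (h : G) : dT := (0, 0, h).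
Definition in_d (a : dT) : Prop := in_n a.1.1 /\ in_h a.2.

Definition d_bracket (bd : dT -> dT -> dT) : Prop :=
  (forall r a a' b, in_d a -> in_d a' -> in_d b ->
     bd (r *: a + a') b = r *: bd a b + bd a' b) /\
  (forall r a b b', in_d a -> in_d b -> in_d b' ->
     bd a (r *: b + b') = r *: bd a b + bd a b') /\
  (forall a b, in_d a -> in_d b -> bd a b = - bd b a) /\
  (forall h h', in_h h -> in_h h' ->
     [/\ bd (Hd h) (Hd h') = 0, bd (Hd h) (Kd (phi h')) = 0
       & bd (Kd (phi h)) (Kd (phi h')) = 0]) /\
  (* [h_lambda, x_alpha] = -(Phi_- lambda | alpha) x_alpha *)
  (forall h x alpha, in_h h -> root_vector x alpha ->
     bd (Hd h) (Nd x) = Nd ((alpha h - uroot h alpha) *: x)) /\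
  (* [k_lambda, x_alpha] = (Phi_+ lambda | alpha) x_alpha *)
  (forall h x alpha, in_h h -> root_vector x alpha ->
     bd (Kd (phi h)) (Nd x) = Nd ((uroot h alpha + alpha h) *: x)) /\
  (forall x alpha y beta, root_vector x alpha -> root_vector y beta ->
     (exists h, in_h h /\ alpha h + beta h != 0) ->
     bd (Nd x) (Nd y) = Nd (bg x y)) /\
  (forall x alpha y beta, root_vector x alpha -> root_vector y beta ->
     (forall h, in_h h -> alpha h + beta h = 0) ->
     bd (Nd x) (Nd y) = (0, 2^-1 *: phi (bg x y), 2^-1 *: bg x y)).

Definition d_form (a b : dT) : F :=
  2 * fg a.2 b.2 + fg a.1.1 b.1.1
  - 2 * uform a.2 (phiinv b.1.2) + 2 * uform (phiinv a.1.2) b.2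
  + 2 * fg (phiinv a.1.2) (phiinv b.1.2).

End Defs.

From HB Require Import structures.
From mathcomp Require Import all_boot all_order all_algebra.
From mathcomp Require Import ring.
From Stdlib Require Import Classical_Prop.
From Stdlib Require List.
Set Implicit Arguments. Unset Strict Implicit. Unset Printing Implicit Defensive.
Import Order.TTheory GRing.Theory Num.Theory.
Local Open Scope ring_scope.

(* Invariance reduces, by trilinearity, to triples of generators of d: root
   vectors x_alpha and Cartan elements (0, k, h). A Cartan element acts on
   x_alpha by a scalar that is odd in alpha, so every case follows from two
   facts about g: root vectors of non-opposite roots are orthogonal, and
   [x_alpha, x_-alpha] lies in h, where (h | [x_alpha, x_-alpha]) =
   alpha(h) (x_alpha | x_-alpha). The latter holds because h is its own
   centralizer: g is spanned by h and iterated brackets of the e_i (resp. f_i),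
   which are weight vectors of nonzero weight since DC is positive definite,
   and a sum of weight vectors of nonzero weights commuting with h vanishes. *)

Section LinearMap.
Variables (R : pzRingType) (U V : lmodType R) (g : U -> V).
Hypothesis g_lin : forall r x y, g (r *: x + y) = r *: g x + g y.

Lemma lin_map0 : g 0 = 0.
Proof. by apply/(addrI (g 0)); rewrite addr0 -{1}(scale1r (g 0)) -g_lin scaler0 addr0. Qed.

Lemma lin_mapD x y : g (x + y) = g x + g y.
Proof. by rewrite -[x]scale1r g_lin !scale1r. Qed.

Lemma lin_mapZ r x : g (r *: x) = r *: g x.
Proof. by rewrite -[r *: x]addr0 g_lin lin_map0 addr0. Qed.

Lemma lin_mapN x : g (- x) = - g x.
Proof. by rewrite -scaleN1r lin_mapZ scaleN1r. Qed.

Lemma lin_map_sum I (s : seq I) (P : pred I) (h : I -> U) :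
  g (\sum_(i <- s | P i) h i) = \sum_(i <- s | P i) g (h i).
Proof. by elim/big_rec2: _ => [|i y1 y2 _ <-]; rewrite ?lin_map0 ?lin_mapD. Qed.
End LinearMap.

Section LinearForm.
Variables (R : comPzRingType) (U : lmodType R) (g : U -> R).
Hypothesis g_lin : forall r x y, g (r *: x + y) = r * g x + g y.

Lemma lin_form0 : g 0 = 0.
Proof. exact: (lin_map0 (V := R^o) g_lin). Qed.

Lemma lin_formZ r x : g (r *: x) = r * g x.
Proof. exact: (lin_mapZ (V := R^o) g_lin). Qed.

Lemma lin_formN x : g (- x) = - g x.
Proof. exact: (lin_mapN (V := R^o) g_lin). Qed.
End LinearForm.

Section LieAlgebra.
Variables (F : numClosedFieldType) (G : lmodType F) (bg : G -> G -> G).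
Hypothesis bg_lie : lie_bracket bg.

Lemma lie_linl z r x y : bg (r *: x + y) z = r *: bg x z + bg y z.
Proof. by case: bg_lie => -[lin _] _; apply: lin. Qed.

Lemma lie_linr z r x y : bg z (r *: x + y) = r *: bg z x + bg z y.
Proof. by case: bg_lie => -[_ lin] _; apply: lin. Qed.

Lemma lie0l z : bg 0 z = 0. Proof. exact: (lin_map0 (g := bg^~ z) (lie_linl z)). Qed.
Lemma lieDl z x y : bg (x + y) z = bg x z + bg y z.
Proof. exact: (lin_mapD (g := bg^~ z) (lie_linl z)). Qed.
Lemma lieDr z x y : bg z (x + y) = bg z x + bg z y.
Proof. exact: (lin_mapD (g := bg z) (lie_linr z)). Qed.
Lemma lieZl z r x : bg (r *: x) z = r *: bg x z.
Proof. exact: (lin_mapZ (g := bg^~ z) (lie_linl z)). Qed.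
Lemma lieZr z r x : bg z (r *: x) = r *: bg z x.
Proof. exact: (lin_mapZ (g := bg z) (lie_linr z)). Qed.
Lemma lieNl z x : bg (- x) z = - bg x z.
Proof. exact: (lin_mapN (g := bg^~ z) (lie_linl z)). Qed.
Lemma lieNr z x : bg z (- x) = - bg z x.
Proof. exact: (lin_mapN (g := bg z) (lie_linr z)). Qed.
Lemma lie_sumr z I (s : seq I) (P : pred I) (h : I -> G) :
  bg z (\sum_(i <- s | P i) h i) = \sum_(i <- s | P i) bg z (h i).
Proof. exact: (lin_map_sum (g := bg z) (lie_linr z)). Qed.

Lemma lie_anti x y : bg x y = - bg y x.
Proof.
case: bg_lie => _ [alt _]; have := alt (x + y).
by rewrite lieDl !lieDr !alt add0r addr0 => /eqP; rewrite addr_eq0 => /eqP.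
Qed.

Lemma lie_leibniz a b c : bg a (bg b c) = bg (bg a b) c + bg b (bg a c).
Proof.
case: bg_lie => _ [_ jacobi]; move/eqP: (jacobi a b c).
rewrite -addrA addr_eq0 => /eqP ->.
by rewrite opprD [bg c (bg a b)]lie_anti [bg c a]lie_anti lieNr !opprK addrC.
Qed.
End LieAlgebra.

Section LinearSpan.
Variables (R : pzRingType) (V : lmodType R).

(* The span of vector.v needs a finite-dimensional vectType. *)
Inductive lspan (P : V -> Prop) : V -> Prop :=
| lspan0 : lspan P 0
| lspan_cons r y x : P y -> lspan P x -> lspan P (r *: y + x).

Lemma lspan_id P y : P y -> lspan P y.
Proof.
by move=> Py; rewrite -[y]scale1r -[_ *: y]addr0; apply: lspan_cons => //; apply: lspan0.
Qed.

Lemma lspanD P x y : lspan P x -> lspan P y -> lspan P (x + y).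
Proof.
elim=> [|r z x' Pz _ IH] Hy; first by rewrite add0r.
by rewrite -addrA; apply: lspan_cons => //; apply: IH.
Qed.

Lemma lspanZ P r x : lspan P x -> lspan P (r *: x).
Proof.
elim=> [|r' z x' Pz _ IH]; first by rewrite scaler0; apply: lspan0.
by rewrite scalerDr scalerA; apply: lspan_cons.
Qed.

Lemma lspan_trans P Q x : (forall y, P y -> lspan Q y) -> lspan P x -> lspan Q x.
Proof.
move=> PQ; elim=> [|r y x' Py _ IH]; first exact: lspan0.
by apply: lspanD => //; apply/lspanZ/PQ.
Qed.

Lemma lspan_lin_image P Q (g : V -> V) x :
  (forall r a b, g (r *: a + b) = r *: g a + g b) ->
  (forall y, P y -> lspan Q (g y)) -> lspan P x -> lspan Q (g x).
Proof.
move=> g_lin PQ; elim=> [|r y x' Py _ IH]; first by rewrite (lin_map0 g_lin); apply: lspan0.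
by rewrite g_lin; apply: lspanD => //; apply/lspanZ/PQ.
Qed.

Lemma eq_on_lspan P (L1 L2 : V -> R) :
  L1 0 = 0 -> L2 0 = 0 ->
  (forall r y x, P y -> lspan P x -> L1 (r *: y + x) = r * L1 y + L1 x) ->
  (forall r y x, P y -> lspan P x -> L2 (r *: y + x) = r * L2 y + L2 x) ->
  (forall y, P y -> L1 y = L2 y) -> forall x, lspan P x -> L1 x = L2 x.
Proof.
move=> L10 L20 L1_lin L2_lin eqL x; elim=> [|r y x' Py Sx' IH]; first by rewrite L10 L20.
by rewrite L1_lin // L2_lin // IH eqL.
Qed.
End LinearSpan.

Section AdChains.
Variables (n : nat) (F : numClosedFieldType) (G : lmodType F) (bg : G -> G -> G).
Hypothesis bg_lie : lie_bracket bg.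

Inductive ad_chain (E : 'I_n -> G) : G -> Prop :=
| ad_chain1 i : ad_chain E (E i)
| ad_chainS i x : ad_chain E x -> ad_chain E (bg (E i) x).

Lemma ad_chain_weight (H E : 'I_n -> G) (c : 'I_n -> 'I_n -> F) y :
  (forall i j, bg (H i) (E j) = c i j *: E j) -> ad_chain E y ->
  exists m : 'I_n -> nat, (exists j, m j != 0%N) /\
    forall i, bg (H i) y = (\sum_j c i j * (m j)%:R) *: y.
Proof.
have delta_sum i j : \sum_k c i k * (k == j)%:R = c i j.
  by rewrite (bigD1 j) //= eqxx mulr1 big1 ?addr0 // => k /negbTE ->; rewrite mulr0.
move=> HE; elim=> [j|j x _ [m [[j0 mj0] IH]]].
  exists (fun k => (k == j)%N); split; first by exists j; rewrite eqxx.
  by move=> i; rewrite HE delta_sum.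
exists (fun k => m k + (k == j))%N; split; first by exists j0; move: mj0; case: (m j0).
move=> i; rewrite lie_leibniz // HE IH lieZl // lieZr // -scalerDl addrC.
congr (_ *: _); under [in RHS]eq_bigr do rewrite natrD mulrDr.
by rewrite big_split /= delta_sum.
Qed.

Lemma ad_chain_eigen (H E : 'I_n -> G) (c : 'I_n -> 'I_n -> F) y i :
  (forall i j, bg (H i) (E j) = c i j *: E j) -> ad_chain E y ->
  exists s, bg (H i) y = s *: y.
Proof. by move=> HE /(ad_chain_weight HE) [m [_ W]]; eexists; apply: W. Qed.

Section RaisingLowering.
Variables (H E Fv : 'I_n -> G) (cF : 'I_n -> 'I_n -> F).
Hypotheses (HF : forall i j, bg (H i) (Fv j) = cF i j *: Fv j)
           (EF : forall i j, bg (E i) (Fv j) = if i == j then H i else 0).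

Definition cartan_or_chain y := (exists k, y = H k) \/ ad_chain Fv y.

Lemma lspan_cartan_or_chain_ad j x :
  lspan cartan_or_chain x -> lspan cartan_or_chain (bg (Fv j) x).
Proof.
apply: lspan_lin_image; first exact: lie_linr.
move=> y [[k ->]|Cy]; last by apply: lspan_id; right; apply: ad_chainS.
rewrite lie_anti // HF -scaleNr; apply/lspanZ/lspan_id.
by right; apply: ad_chain1.
Qed.

Lemma lspan_raise_chain i y : ad_chain Fv y -> lspan cartan_or_chain (bg (E i) y).
Proof.
elim=> [j|j x Cx IH].
  by rewrite EF; case: (i == j); [apply: lspan_id; left; exists i | apply: lspan0].
rewrite lie_leibniz // EF; apply: lspanD; last exact: lspan_cartan_or_chain_ad.
case: (i == j); last by rewrite lie0l //; apply: lspan0.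
have [s ->] := ad_chain_eigen i HF Cx.
by apply/lspanZ/lspan_id; right.
Qed.
End RaisingLowering.
End AdChains.

Section CartanSpan.
Variables (n : nat) (F : numClosedFieldType) (G : lmodType F) (hh : 'I_n -> G).

Lemma in_h0 : in_h hh 0.
Proof. by exists (fun _ => 0); rewrite big1 // => i _; rewrite scale0r. Qed.

Lemma in_h_hh i : in_h hh (hh i).
Proof.
exists (fun k => (k == i)%:R); rewrite (bigD1 i) //= eqxx scale1r big1 ?addr0 //.
by move=> k /negbTE ->; rewrite scale0r.
Qed.

Lemma in_h_comb r x y : in_h hh x -> in_h hh y -> in_h hh (r *: x + y).
Proof.
move=> [c ->] [c' ->]; exists (fun k => r * c k + c' k).
rewrite scaler_sumr -big_split /=; apply: eq_bigr => k _.
by rewrite scalerDl scalerA.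
Qed.
End CartanSpan.

Section CartanCentralizer.
Variables (n : nat) (F : numClosedFieldType) (G : lmodType F) (bg : G -> G -> G).
Variables (C : 'M[int]_n) (hh e f : 'I_n -> G) (d : 'I_n -> nat).
Hypotheses (bg_lie : lie_bracket bg) (serre : chevalley_serre C bg hh e f)
  (generated : lie_generated bg hh e f) (symmetrizer : sym_posdef_symmetrizer C d).

Let hh_hh i j : bg (hh i) (hh j) = 0.
Proof. by case: serre. Qed.
Let hh_e i j : bg (hh i) (e j) = (C i j)%:~R *: e j.
Proof. by case: serre => _ []. Qed.
Let hh_f i j : bg (hh i) (f j) = (- (C i j)%:~R) *: f j.
Proof. by case: serre => _ [_ [-> _]]; rewrite scaleNr. Qed.
Let e_f i j : bg (e i) (f j) = if i == j then hh i else 0.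
Proof. by case: serre => _ [_ [_ []]]. Qed.

Definition chevalley_monomial y :=
  (exists i, y = hh i) \/ ad_chain bg e y \/ ad_chain bg f y.

Lemma lspan_ad_hh_monomial i y :
  chevalley_monomial y -> lspan chevalley_monomial (bg (hh i) y).
Proof.
case=> [[j ->]|[Cy|Cy]]; first by rewrite hh_hh; apply: lspan0.
- have [s ->] := ad_chain_eigen bg_lie i hh_e Cy.
  by apply/lspanZ/lspan_id; right; left.
- have [s ->] := ad_chain_eigen bg_lie i hh_f Cy.
  by apply/lspanZ/lspan_id; right; right.
Qed.

Lemma lspan_ad_e_monomial i y :
  chevalley_monomial y -> lspan chevalley_monomial (bg (e i) y).
Proof.
case=> [[j ->]|[Cy|Cy]].
- rewrite lie_anti // hh_e -scaleNr; apply/lspanZ/lspan_id.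
  by right; left; apply: ad_chain1.
- by apply: lspan_id; right; left; apply: ad_chainS.
- apply: lspan_trans (lspan_raise_chain bg_lie hh_f e_f i Cy).
  by move=> z [[k ->]|Cz]; apply: lspan_id; [left; exists k | right; right].
Qed.

Lemma lspan_ad_f_monomial i y :
  chevalley_monomial y -> lspan chevalley_monomial (bg (f i) y).
Proof.
(* The roles of e and f are swapped by taking the - hh i as Cartan generators. *)
have Nhh_f i' j : bg (- hh i') (f j) = (C i' j)%:~R *: f j.
  by rewrite lieNl // hh_f scaleNr opprK.
have Nhh_e i' j : bg (- hh i') (e j) = (- (C i' j)%:~R) *: e j.
  by rewrite lieNl // hh_e scaleNr.
have f_e i' j : bg (f i') (e j) = if i' == j then - hh i' else 0.
  by rewrite lie_anti // e_f eq_sym; case: (eqVneq j i') => [->|]; rewrite ?oppr0.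
case=> [[j ->]|[Cy|Cy]].
- rewrite lie_anti // hh_f -scaleNr; apply/lspanZ/lspan_id.
  by right; right; apply: ad_chain1.
- apply: lspan_trans (lspan_raise_chain bg_lie Nhh_e f_e i Cy).
  move=> z [[k ->]|Cz]; last by apply: lspan_id; right; left.
  by rewrite -scaleN1r; apply/lspanZ/lspan_id; left; exists k.
- by apply: lspan_id; right; right; apply: ad_chainS.
Qed.

Lemma lspan_monomial_ad z x :
  lspan chevalley_monomial x -> lspan chevalley_monomial (bg z x).
Proof.
move: z x; apply: generated.
- by move=> x _; rewrite lie0l //; apply: lspan0.
- by move=> x y Px Py w Sw; rewrite lieDl //; apply: lspanD; [apply: Px | apply: Py].
- by move=> r x Px w Sw; rewrite lieZl //; apply/lspanZ/Px.
- move=> x y Px Py w Sw.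
  have -> : bg (bg x y) w = bg x (bg y w) + (-1) *: bg y (bg x w).
    by rewrite (lie_leibniz bg_lie x) scaleN1r addrK.
  by apply: lspanD; [apply/Px/Py | apply/lspanZ/Py/Px].
- move=> i; split; [|split]; move=> w; apply: lspan_lin_image; try exact: lie_linr.
  + exact: lspan_ad_hh_monomial.
  + exact: lspan_ad_e_monomial.
  + exact: lspan_ad_f_monomial.
Qed.

Lemma lspan_monomial x : lspan chevalley_monomial x.
Proof.
move: x; apply: generated.
- exact: lspan0.
- exact: lspanD.
- by move=> r x; apply: lspanZ.
- by move=> x y _ Py; apply: lspan_monomial_ad.
- move=> i; split; [|split]; apply: lspan_id.
  + by left; exists i.
  + by right; left; apply: ad_chain1.
  + by right; right; apply: ad_chain1.
Qed.

Lemma weight_neq0 (m : 'I_n -> nat) : (exists j, m j != 0%N) ->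
  exists i, (\sum_j (C i j)%:~R * (m j)%:R : F) != 0.
Proof.
(* Otherwise m^T D C m = 0, contradicting positive definiteness. *)
move=> [j0 mj0].
have [i nz | all0] := pickP (fun i => \sum_j C i j * (m j)%:Z != 0).
  exists i; move: nz; rewrite -(intr_eq0 F) rmorph_sum /=.
  by under eq_bigr do rewrite intrM.
case: symmetrizer => _ [_ posdef].
have /posdef : exists j, ((m j)%:R : rat) != 0 by exists j0; rewrite pnatr_eq0.
rewrite big1 ?ltxx // => i _; have /negbFE/eqP Zi := all0 i.
transitivity ((m i)%:R * (d i)%:R * (\sum_j C i j * (m j)%:Z)%:~R : rat);
  last by rewrite Zi mulr0.
rewrite rmorph_sum mulr_sumr; apply: eq_bigr => j _; rewrite !intrM; ring.
Qed.

Lemma lie_hh_h i h : in_h hh h -> bg (hh i) h = 0.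
Proof.
move=> [c ->]; rewrite lie_sumr //; apply: big1 => k _.
by rewrite lieZr // hh_hh scaler0.
Qed.

Definition weight_pair (p : ('I_n -> F) * G) :=
  (forall i, bg (hh i) p.2 = p.1 i *: p.2) /\ exists i, p.1 i != 0.

Lemma weight_pairZ (mu : 'I_n -> F) v r : weight_pair (mu, v) -> weight_pair (mu, r *: v).
Proof. by move=> [E nz]; split => // i /=; rewrite lieZr // E !scalerA mulrC. Qed.

Lemma weight_decomposition x : exists hx s,
  [/\ in_h hh hx, List.Forall weight_pair s & x = hx + \sum_(p <- s) p.2].
Proof.
elim: (lspan_monomial x) => [|r y x' My _ [hx [s [Hhx Hs ->]]]].
  by exists 0, [::]; rewrite big_nil addr0; split => //; apply: in_h0.
case: My => [[i ->]|[Cy|Cy]].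
- exists (r *: hh i + hx), s; rewrite addrA; split => //.
  exact/in_h_comb/Hhx/in_h_hh.
- have [m [nz W]] := ad_chain_weight bg_lie hh_e Cy.
  exists hx, (((fun i => \sum_j (C i j)%:~R * (m j)%:R), r *: y) :: s).
  rewrite big_cons /= addrCA; split => //; constructor => //.
  exact/weight_pairZ/(conj W)/weight_neq0.
- have [m [nz W]] := ad_chain_weight bg_lie hh_f Cy.
  exists hx, (((fun i => \sum_j - (C i j)%:~R * (m j)%:R), r *: y) :: s).
  rewrite big_cons /= addrCA; split => //; constructor => //.
  apply/weight_pairZ/(conj W); have [i Hi] := weight_neq0 nz; exists i.
  rewrite /=; under eq_bigr do rewrite mulNr.
  by rewrite sumrN oppr_eq0.
Qed.

Lemma weight_sum_eq0 s : List.Forall weight_pair s ->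
  (forall i, bg (hh i) (\sum_(p <- s) p.2) = 0) -> \sum_(p <- s) p.2 = 0.
Proof.
have [N] := ubnP (size s); elim: N s => // N IH [|[mu v] s] /= size_s.
  by rewrite big_nil.
move=> /List.Forall_cons_iff [[Ev [i0 nz]] Hs] Z.
have ad_sum i : bg (hh i) (\sum_(p <- s) p.2) = \sum_(p <- s) p.1 i *: p.2.
  rewrite lie_sumr //; elim: s {size_s IH Z} Hs => [|q s' IHs]; first by rewrite !big_nil.
  by move=> /List.Forall_cons_iff [[Eq _] Hs']; rewrite !big_cons Eq IHs.
(* Applying ad (hh i0) - mu i0 kills the head and gives a shorter sum of weight
   vectors, which is also - mu i0 times the whole sum. *)
pose s' := [seq (q.1, (q.1 i0 - mu i0) *: q.2) | q <- s].
have sum_s' : \sum_(q <- s') q.2 = - mu i0 *: \sum_(q <- (mu, v) :: s) q.2.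
  have := Z i0; rewrite big_cons lieDr // Ev ad_sum => /eqP; rewrite addrC addr_eq0.
  move=> /eqP Zi0; rewrite big_map /=; under eq_bigr do rewrite scalerBl.
  by rewrite sumrB -scaler_sumr Zi0 scalerDr !scaleNr.
have Hs' : List.Forall weight_pair s'.
  apply/List.Forall_map; apply: List.Forall_impl Hs => -[mu' v'].
  exact: weight_pairZ.
have /eqP : \sum_(q <- s') q.2 = 0.
  by apply: IH; rewrite ?size_map // => i; rewrite sum_s' lieZr // Z scaler0.
by rewrite sum_s' scaler_eq0 oppr_eq0 (negbTE nz) => /eqP.
Qed.

Lemma centralizer_hh w : (forall i, bg (hh i) w = 0) -> in_h hh w.
Proof.
move=> Zw; have [hw [s [Hhw Hs E]]] := weight_decomposition w.
suff S0 : \sum_(p <- s) p.2 = 0 by rewrite E S0 addr0.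
apply: weight_sum_eq0 => // i.
by have := Zw i; rewrite E lieDr // lie_hh_h // add0r.
Qed.

Lemma lie_root_opp_in_h x y alpha beta :
  root_vector bg hh x alpha -> root_vector bg hh y beta ->
  (forall h, in_h hh h -> alpha h + beta h = 0) -> in_h hh (bg x y).
Proof.
move=> [_ [_ Ex]] [_ [_ Ey]] opp_ab; apply: centralizer_hh => i.
rewrite lie_leibniz // (Ex _ (in_h_hh hh i)) (Ey _ (in_h_hh hh i)) lieZl // lieZr //.
by rewrite -scalerDl opp_ab ?scale0r //; apply: in_h_hh.
Qed.
End CartanCentralizer.

Section BilinearForm.
Variables (F : numClosedFieldType) (G : lmodType F) (fg : G -> G -> F).
Hypotheses (fg_bil : bilinear_form fg) (fg_sym : forall x y, fg x y = fg y x).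

Lemma fg_linl z r x y : fg (r *: x + y) z = r * fg x z + fg y z.
Proof. by case: fg_bil => lin _; apply: lin. Qed.

Lemma fg0l z : fg 0 z = 0. Proof. exact: (lin_form0 (g := fg^~ z) (fg_linl z)). Qed.
Lemma fg0r z : fg z 0 = 0. Proof. by rewrite fg_sym fg0l. Qed.
Lemma fgZl z r x : fg (r *: x) z = r * fg x z.
Proof. exact: (lin_formZ (g := fg^~ z) (fg_linl z)). Qed.
Lemma fgZr z r x : fg z (r *: x) = r * fg z x.
Proof. by rewrite fg_sym fgZl fg_sym. Qed.
Lemma fgNl z x : fg (- x) z = - fg x z.
Proof. exact: (lin_formN (g := fg^~ z) (fg_linl z)). Qed.
Lemma fgNr z x : fg z (- x) = - fg z x.
Proof. by rewrite fg_sym fgNl fg_sym. Qed.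
End BilinearForm.

Section CartanIsomorphism.
Variables (n : nat) (F : numClosedFieldType) (G : lmodType F) (hh : 'I_n -> G).
Variables (K : lmodType F) (phi : G -> K) (phiinv : K -> G).
Hypothesis phi_h : phi_iso hh phi phiinv.

Lemma phiinv_in_h k : in_h hh (phiinv k).
Proof. by case: phi_h => _ [/(_ k) []]. Qed.
Lemma phiinvK k : phi (phiinv k) = k.
Proof. by case: phi_h => _ [/(_ k) []]. Qed.
Lemma phiK h : in_h hh h -> phiinv (phi h) = h.
Proof. by case: phi_h => _ [_]; apply. Qed.

Lemma phiinv_lin r k k' : phiinv (r *: k + k') = r *: phiinv k + phiinv k'.
Proof.
case: phi_h => phi_lin _.
rewrite -{1}(phiinvK k) -{1}(phiinvK k') -phi_lin ?phiK //; try exact: phiinv_in_h.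
exact/in_h_comb/phiinv_in_h/phiinv_in_h.
Qed.

Lemma phiinv0 : phiinv 0 = 0.
Proof. exact: (lin_map0 phiinv_lin). Qed.
Lemma phiinvZ r k : phiinv (r *: k) = r *: phiinv k.
Proof. exact: (lin_mapZ phiinv_lin). Qed.
End CartanIsomorphism.

Section DForm.
Variables (n : nat) (F : numClosedFieldType) (G : lmodType F) (hh : 'I_n -> G).
Variables (fg : G -> G -> F) (u : 'M[F]_n) (K : lmodType F) (phiinv : K -> G).
Hypotheses (fg_bil : bilinear_form fg) (fg_sym : forall x y, fg x y = fg y x)
  (u_skew : skew_symmetric u)
  (phiinv_linear : forall r k k', phiinv (r *: k + k') = r *: phiinv k + phiinv k').

Local Notation uf := (uform hh fg u).
Local Notation D := (d_form hh fg u phiinv).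

Lemma uform_linl z r x y : uf (r *: x + y) z = r * uf x z + uf y z.
Proof.
rewrite /uform mulr_sumr -big_split /=; apply: eq_bigr => i _.
by rewrite mulr_sumr -big_split /=; apply: eq_bigr => j _; rewrite (fg_linl fg_bil); ring.
Qed.

Lemma uform_anti x y : uf x y = - uf y x.
Proof.
rewrite /uform exchange_big -sumrN; apply: eq_bigr => i _.
by rewrite -sumrN; apply: eq_bigr => j _; rewrite (u_skew j i); ring.
Qed.

Lemma uform0l z : uf 0 z = 0. Proof. exact: (lin_form0 (g := uf^~ z) (uform_linl z)). Qed.
Lemma uformZr z r x : uf z (r *: x) = r * uf z x.
Proof. by rewrite uform_anti (lin_formZ (g := uf^~ z) (uform_linl z)) uform_anti; ring. Qed.

Lemma d_formC a b : D a b = D b a.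
Proof.
rewrite /d_form fg_sym (fg_sym a.1.1) (fg_sym (phiinv a.1.2)).
by rewrite (uform_anti a.2) (uform_anti (phiinv a.1.2)); ring.
Qed.

Lemma d_form_linl c r a b : D (r *: a + b) c = r * D a c + D b c.
Proof. by rewrite /d_form /= phiinv_linear !(fg_linl fg_bil) !uform_linl; ring. Qed.

Lemma d_form_linr c r a b : D c (r *: a + b) = r * D c a + D c b.
Proof. by rewrite d_formC d_form_linl !(d_formC c). Qed.

Lemma d_form0l b : D 0 b = 0.
Proof. exact: (lin_form0 (g := D^~ b) (d_form_linl b)). Qed.
Lemma d_formNl b a : D (- a) b = - D a b.
Proof. exact: (lin_formN (g := D^~ b) (d_form_linl b)). Qed.
Lemma d_formNr b a : D b (- a) = - D b a.
Proof. by rewrite d_formC d_formNl d_formC. Qed.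
Lemma d_form0r b : D b 0 = 0.
Proof. by rewrite d_formC d_form0l. Qed.
End DForm.

Section DoubleSpace.
Variables (n : nat) (F : numClosedFieldType) (G : lmodType F) (bg : G -> G -> G).
Variables (hh : 'I_n -> G) (K : lmodType F).
Hypothesis bg_lie : lie_bracket bg.

Local Notation inh := (in_h hh).
Local Notation ind := (in_d bg hh (K := K)).
Local Notation rv := (root_vector bg hh).
Local Notation N := (Nd K).
Local Notation H := (Hd K).
Local Notation Kd := (Kd G).

Lemma dT_ext (a b : dT G K) : a.1.1 = b.1.1 -> a.1.2 = b.1.2 -> a.2 = b.2 -> a = b.
Proof. by case: a => [[? ?] ?]; case: b => [[? ?] ?] /= -> -> ->. Qed.

Lemma NdD (x y : G) : N (x + y) = N x + N y.
Proof. by apply: dT_ext; rewrite /= ?addr0. Qed.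
Lemma NdN (x : G) : N (- x) = - N x.
Proof. by apply: dT_ext; rewrite /= ?oppr0. Qed.

Lemma root_vectorZ r x alpha : r != 0 -> rv x alpha -> rv (r *: x) alpha.
Proof.
move=> r_nz [x_nz [ex E]]; split; first by rewrite scaler_eq0 negb_or r_nz.
by split=> // h ih; rewrite lieZr // E // !scalerA mulrC.
Qed.

Lemma in_n_comb r x y : in_n bg hh x -> in_n bg hh y -> in_n bg hh (r *: x + y).
Proof.
move=> [s [Hs ->]] [s' [Hs' ->]].
have [->|r_nz] := eqVneq r 0; first by rewrite scale0r add0r; exists s'.
exists ([seq r *: z | z <- s] ++ s'); split; last by rewrite big_cat big_map scaler_sumr.
move=> z; rewrite mem_cat => /orP [/mapP [z' z's ->]|]; last exact: Hs'.
by have [al ral] := Hs z' z's; exists al; apply: root_vectorZ.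
Qed.

Lemma in_d0 : ind 0.
Proof. by split; [exists [::]; rewrite big_nil | exact: in_h0]. Qed.

Lemma in_d_comb r a b : ind a -> ind b -> ind (r *: a + b).
Proof. by move=> [a1 a2] [b1 b2]; split; [apply: in_n_comb | apply: in_h_comb]. Qed.

Lemma in_d_root x alpha : rv x alpha -> ind (N x).
Proof.
move=> rx; split; last exact: in_h0.
by exists [:: x]; rewrite big_seq1; split => // z; rewrite inE => /eqP ->; exists alpha.
Qed.

Definition cartan (c : dT G K) := c.1.1 = 0 /\ inh c.2.

Lemma in_d_Kd k : ind (Kd k).
Proof. by split; [exists [::]; rewrite big_nil | exact: in_h0]. Qed.
Lemma in_d_H h : inh h -> ind (H h).
Proof. by split=> //; exists [::]; rewrite big_nil. Qed.
Lemma in_d_cartan c : cartan c -> ind c.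
Proof. by case=> c11 ic2; split; rewrite // c11; exists [::]; rewrite big_nil. Qed.

Definition root_elt (a : dT G K) := exists x alpha, rv x alpha /\ a = N x.
Definition d_generator a := root_elt a \/ cartan a.

Lemma in_d_generator a : d_generator a -> ind a.
Proof. by case=> [[x [alpha [rx ->]]]|]; [exact: in_d_root rx | exact: in_d_cartan]. Qed.

Lemma lspan_in_d a : lspan d_generator a -> ind a.
Proof.
by elim=> [|r y x gy _ IH]; [exact: in_d0 | exact/in_d_comb/IH/in_d_generator].
Qed.

Lemma lspan_root_sum x : in_n bg hh x -> lspan d_generator (N x).
Proof.
case=> s [roots ->]; elim: s roots => [|y s IH] roots.
  by rewrite big_nil; apply: lspan0.
rewrite big_cons NdD -[N y]scale1r; apply: lspan_cons.
  by have [alpha ry] := roots y (mem_head y s); left; exists y, alpha.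
by apply: IH => z zs; apply: roots; rewrite inE zs orbT.
Qed.

Lemma in_d_lspan a : ind a -> lspan d_generator a.
Proof.
case: a => [[x k] h] [/= nx ih].
have -> : ((x, k, h) : dT G K) = N x + (0, k, h) by apply: dT_ext; rewrite /= ?addr0 ?add0r.
by apply: lspanD; [exact: lspan_root_sum | apply: lspan_id; right].
Qed.
End DoubleSpace.

Section Invariance.
Variables (n : nat) (F : numClosedFieldType) (G : lmodType F) (bg : G -> G -> G).
Variables (C : 'M[int]_n) (hh e f : 'I_n -> G) (d : 'I_n -> nat) (fg : G -> G -> F).
Variables (u : 'M[F]_n) (K : lmodType F) (phi : G -> K) (phiinv : K -> G).
Variable bd : dT G K -> dT G K -> dT G K.
Hypotheses (bg_lie : lie_bracket bg) (serre : chevalley_serre C bg hh e f)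
  (generated : lie_generated bg hh e f) (symmetrizer : sym_posdef_symmetrizer C d)
  (fg_inv : g_invariant_form C bg hh e f d fg) (u_skew : skew_symmetric u)
  (phi_h : phi_iso hh phi phiinv) (bd_d : d_bracket bg hh fg u phi bd).

Local Notation inh := (in_h hh).
Local Notation ind := (in_d bg hh (K := K)).
Local Notation rv := (root_vector bg hh).
Local Notation ur := (uroot hh fg u).
Local Notation uf := (uform hh fg u).
Local Notation D := (d_form hh fg u phiinv).
Local Notation N := (Nd K).
Local Notation H := (Hd K).
Local Notation Kd := (Kd G).
Local Notation dgen := (d_generator bg hh (K := K)).

Definition opposite (alpha beta : G -> F) := forall h, inh h -> alpha h + beta h = 0.

Let fg_bil : bilinear_form fg. Proof. by case: fg_inv. Qed.
Let fg_sym x y : fg x y = fg y x. Proof. by case: fg_inv => _ []. Qed.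
Let fg_invariant x y z : fg (bg x y) z = fg x (bg y z).
Proof. by case: fg_inv => _ [_ []]. Qed.

Let phiinv_linear r k k' : phiinv (r *: k + k') = r *: phiinv k + phiinv k'.
Proof. exact: (phiinv_lin phi_h). Qed.

Let bd_linl r a a' b : ind a -> ind a' -> ind b -> bd (r *: a + a') b = r *: bd a b + bd a' b.
Proof. by case: bd_d => lin _; apply: lin. Qed.
Let bd_linr r a b b' : ind a -> ind b -> ind b' -> bd a (r *: b + b') = r *: bd a b + bd a b'.
Proof. by case: bd_d => _ [lin _]; apply: lin. Qed.
Let bd_anti a b : ind a -> ind b -> bd a b = - bd b a.
Proof. by case: bd_d => _ [_ [P _]]; apply: P. Qed.
Let bd_cartan_gens h h' : inh h -> inh h' ->
  [/\ bd (H h) (H h') = 0, bd (H h) (Kd (phi h')) = 0 & bd (Kd (phi h)) (Kd (phi h')) = 0].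
Proof. by case: bd_d => _ [_ [_ [P _]]]; apply: P. Qed.
Let bd_h_root h x alpha : inh h -> rv x alpha ->
  bd (H h) (N x) = N ((alpha h - ur h alpha) *: x).
Proof. by case: bd_d => _ [_ [_ [_ [P _]]]]; apply: P. Qed.
Let bd_k_root h x alpha : inh h -> rv x alpha ->
  bd (Kd (phi h)) (N x) = N ((ur h alpha + alpha h) *: x).
Proof. by case: bd_d => _ [_ [_ [_ [_ [P _]]]]]; apply: P. Qed.
Let bd_roots x alpha y beta : rv x alpha -> rv y beta ->
  (exists h, inh h /\ alpha h + beta h != 0) -> bd (N x) (N y) = N (bg x y).
Proof. by case: bd_d => _ [_ [_ [_ [_ [_ [P _]]]]]]; apply: P. Qed.
Let bd_roots_opp x alpha y beta : rv x alpha -> rv y beta -> opposite alpha beta ->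
  bd (N x) (N y) = (0, 2^-1 *: phi (bg x y), 2^-1 *: bg x y).
Proof. by case: bd_d => _ [_ [_ [_ [_ [_ [_ P]]]]]]; apply: P. Qed.

Lemma bd0l b : ind b -> bd 0 b = 0.
Proof.
move=> ib; apply/(addrI (bd 0 b)); rewrite addr0 -{1}(scale1r (bd 0 b)).
by rewrite -bd_linl ?scaler0 ?addr0 //; apply: in_d0.
Qed.
Lemma bd0r a : ind a -> bd a 0 = 0.
Proof. by move=> ia; rewrite bd_anti ?bd0l ?oppr0 //; apply: in_d0. Qed.

Lemma opposite_or_not alpha beta :
  opposite alpha beta \/ exists h, inh h /\ alpha h + beta h != 0.
Proof.
have [|none] := classic (exists h, inh h /\ alpha h + beta h != 0); first by right.
by left=> h ih; apply/eqP/negPn/negP => nz; apply: none; exists h.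
Qed.

Lemma opposite_at alpha beta h : opposite alpha beta -> inh h -> beta h = - alpha h.
Proof. by move=> op ih; apply/eqP; rewrite -addr_eq0 addrC op. Qed.

Lemma fg_weight_orth v z (mu nu : G -> F) :
  (forall h, inh h -> bg h v = mu h *: v) -> (forall h, inh h -> bg h z = nu h *: z) ->
  (exists h, inh h /\ mu h + nu h != 0) -> fg v z = 0.
Proof.
move=> Ev Ez [h [ih nz]]; have := fg_invariant v h z.
rewrite (Ez _ ih) lie_anti // (Ev _ ih) fgNl // fgZl // fgZr // => /eqP.
by rewrite eq_sym -addr_eq0 -mulrDl addrC mulf_eq0 (negbTE nz) => /eqP.
Qed.

Lemma lie_root_weight x y alpha beta : rv x alpha -> rv y beta ->
  forall h, inh h -> bg h (bg x y) = (alpha h + beta h) *: bg x y.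
Proof.
move=> [_ [_ Ex]] [_ [_ Ey]] h ih.
by rewrite lie_leibniz // (Ex h) // (Ey h) // lieZl // lieZr // scalerDl.
Qed.

Lemma fg_roots_orth x y alpha beta : rv x alpha -> rv y beta ->
  (exists h, inh h /\ alpha h + beta h != 0) -> fg x y = 0.
Proof. by move=> [_ [_ Ex]] [_ [_ Ey]]; apply: fg_weight_orth. Qed.

Lemma uroot_opposite h alpha beta : opposite alpha beta -> ur h beta = - ur h alpha.
Proof.
move=> op; rewrite /uroot -sumrN; apply: eq_bigr => i _; rewrite -sumrN.
by apply: eq_bigr => j _; rewrite (opposite_at op (in_h_hh _ j)) mulrN.
Qed.

Section Coroot.
Variables (x y : G) (alpha beta : G -> F).
Hypotheses (ry : rv y beta) (op : opposite alpha beta).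

Lemma fg_coroot h : inh h -> fg (bg x y) h = alpha h * fg x y.
Proof.
case: ry => _ [_ Ey] ih; rewrite fg_invariant lie_anti // Ey // fgNr // fgZr //.
by rewrite (opposite_at op ih) mulNr opprK.
Qed.

Lemma uform_coroot h : uf h (bg x y) = ur h alpha * fg x y.
Proof.
rewrite /uform /uroot mulr_suml; apply: eq_bigr => i _; rewrite mulr_suml.
by apply: eq_bigr => j _; rewrite fg_coroot ?mulrA //; apply: in_h_hh.
Qed.
End Coroot.

Lemma d_form_Nl x b : D (N x) b = fg x b.1.1.
Proof. by rewrite /d_form /= (phiinv0 phi_h) !(fg0l fg_bil) !(uform0l hh u fg_bil); ring. Qed.
Lemma d_form_Nr x b : D b (N x) = fg b.1.1 x.
Proof. by rewrite d_formC // d_form_Nl fg_sym. Qed.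

(* For c = k_lambda + h_mu this is (Phi_+ lambda | alpha) - (Phi_- mu | alpha). *)
Definition cartan_weight (c : dT G K) (alpha : G -> F) :=
  ur (phiinv c.1.2) alpha + alpha (phiinv c.1.2) + (alpha c.2 - ur c.2 alpha).

Lemma cartanE c : cartan hh c -> c = Kd (phi (phiinv c.1.2)) + H c.2.
Proof.
by case: c => [[x k] h] [/= -> _]; apply: dT_ext; rewrite /= ?(phiinvK phi_h) ?addr0 ?add0r.
Qed.

Lemma bdDl a a' b : ind a -> ind a' -> ind b -> bd (a + a') b = bd a b + bd a' b.
Proof. by move=> *; rewrite -[a]scale1r bd_linl ?scale1r. Qed.
Lemma bdDr a b b' : ind a -> ind b -> ind b' -> bd a (b + b') = bd a b + bd a b'.
Proof. by move=> *; rewrite -[b]scale1r bd_linr ?scale1r. Qed.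

Lemma bd_cartan_root c x alpha : cartan hh c -> rv x alpha ->
  bd c (N x) = N (cartan_weight c alpha *: x).
Proof.
move=> cc rx; have ic2 := cc.2; have ix := in_d_root K rx.
have [iK iH] := (in_d_Kd bg hh (phi (phiinv c.1.2)), in_d_H bg K ic2).
rewrite {1}(cartanE cc) bdDl // (bd_k_root (phiinv_in_h phi_h _) rx) (bd_h_root ic2 rx).
by rewrite -NdD -scalerDl.
Qed.

Lemma bd_root_cartan c x alpha : cartan hh c -> rv x alpha ->
  bd (N x) c = N (- (cartan_weight c alpha *: x)).
Proof.
move=> cc rx; have [ix ic] := (in_d_root K rx, in_d_cartan bg cc).
by rewrite (bd_anti ix ic) (bd_cartan_root cc rx) NdN.
Qed.

Lemma cartan_weight_opposite c alpha beta : cartan hh c -> opposite alpha beta ->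
  cartan_weight c beta = - cartan_weight c alpha.
Proof.
move=> [_ ic2] op; have ik := phiinv_in_h phi_h c.1.2.
by rewrite /cartan_weight !(uroot_opposite _ op) !(opposite_at op) //; ring.
Qed.

Lemma d_form_cartan_coroot c x y alpha beta : cartan hh c -> rv x alpha -> rv y beta ->
  opposite alpha beta -> D c (bd (N x) (N y)) = cartan_weight c alpha * fg x y.
Proof.
move=> [_ ic2] rx ry op; have ik := phiinv_in_h phi_h c.1.2.
(* [phiinv] undoes [phi] only on h, where [bg x y] lies. *)
have ixy := lie_root_opp_in_h bg_lie serre generated symmetrizer rx ry op.
rewrite (bd_roots_opp rx ry op) /d_form /= (phiinvZ phi_h) (phiK phi_h) //.
rewrite (fg0r fg_bil fg_sym) !(fgZr fg_bil fg_sym) !(uformZr hh fg_bil u_skew).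
rewrite !(uform_coroot x ry op) !(fg_sym _ (bg x y)).
rewrite !(fg_coroot x ry op) // /cartan_weight.
by field.
Qed.

Lemma bd_cartan c c' : cartan hh c -> cartan hh c' -> bd c c' = 0.
Proof.
move=> cc cc'; have [[_ ih] [_ ih']] := (cc, cc').
have [ik ik'] := (phiinv_in_h phi_h c.1.2, phiinv_in_h phi_h c'.1.2).
have [iK iK'] := (in_d_Kd bg hh (phi (phiinv c.1.2)), in_d_Kd bg hh (phi (phiinv c'.1.2))).
have [iH iH'] := (in_d_H bg K ih, in_d_H bg K ih'); have ic' := in_d_cartan bg cc'.
rewrite {1}(cartanE cc) bdDl // (cartanE cc') !bdDr //.
have [HH _ _] := bd_cartan_gens ih ih'; have [_ _ KK] := bd_cartan_gens ik ik'.
have [_ HK _] := bd_cartan_gens ih ik'; have [_ KH _] := bd_cartan_gens ih' ik.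
by rewrite HH KK HK (bd_anti iK iH') KH oppr0 !addr0.
Qed.

Lemma d_form_cartan_root c x : cartan hh c -> D c (N x) = 0.
Proof. by case=> c11 _; rewrite d_form_Nr c11 (fg0l fg_bil). Qed.
Lemma d_form_root_cartan c x : cartan hh c -> D (N x) c = 0.
Proof. by move=> cc; rewrite d_formC // d_form_cartan_root. Qed.

Definition invariant_at a b c := D (bd a b) c = D a (bd b c).

(* This halves the case analysis over generators. *)
Lemma invariant_at_rev a b c : ind a -> ind b -> ind c ->
  invariant_at a b c -> invariant_at c b a.
Proof.
rewrite /invariant_at => ia ib ic E.
rewrite (bd_anti ic ib) (bd_anti ib ia) d_formNl // d_formNr //.
by rewrite d_formC // -E d_formC.
Qed.

Section RootTriples.
Variables (x y z : G) (alpha beta gamma : G -> F).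
Hypotheses (rx : rv x alpha) (ry : rv y beta) (rz : rv z gamma).

Lemma invariant_roots : invariant_at (N x) (N y) (N z).
Proof.
rewrite /invariant_at.
have [op1|nop1] := opposite_or_not alpha beta;
  have [op2|nop2] := opposite_or_not beta gamma.
- by rewrite (bd_roots_opp rx ry op1) (bd_roots_opp ry rz op2) d_form_Nr d_form_Nl
    (fg0l fg_bil) (fg0r fg_bil fg_sym).
- rewrite (bd_roots_opp rx ry op1) (bd_roots ry rz nop2) d_form_Nr d_form_Nl /=.
  rewrite (fg0l fg_bil); symmetry; case: rx => _ [_ Ex].
  apply: (fg_weight_orth Ex (lie_root_weight ry rz)).
  have [_ [[h [ih nz]] _]] := rz; exists h; split => //.
  by rewrite addrA op1 // add0r.
- rewrite (bd_roots rx ry nop1) (bd_roots_opp ry rz op2) d_form_Nr d_form_Nl /=.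
  rewrite (fg0r fg_bil fg_sym); case: rz => _ [_ Ez].
  apply: (fg_weight_orth (lie_root_weight rx ry) Ez).
  have [_ [[h [ih nz]] _]] := rx; exists h; split => //.
  by rewrite -addrA op2 // addr0.
- by rewrite (bd_roots rx ry nop1) (bd_roots ry rz nop2) d_form_Nr d_form_Nl fg_invariant.
Qed.

Variables c c' : dT G K.
Hypotheses (cc : cartan hh c) (cc' : cartan hh c').

Lemma invariant_roots_cartan : invariant_at (N x) (N y) c.
Proof.
rewrite /invariant_at (bd_root_cartan cc ry) d_form_Nl /= (fgNr fg_bil fg_sym).
rewrite (fgZr fg_bil fg_sym).
have [op|nop] := opposite_or_not alpha beta.
  rewrite d_formC // (d_form_cartan_coroot cc rx ry op).
  by rewrite (cartan_weight_opposite cc op) mulNr opprK.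
by rewrite (bd_roots rx ry nop) d_form_root_cartan // (fg_roots_orth rx ry nop) mulr0 oppr0.
Qed.

Lemma invariant_root_cartan_root : invariant_at (N x) c (N z).
Proof.
rewrite /invariant_at (bd_root_cartan cc rx) (bd_cartan_root cc rz) d_form_Nl d_form_Nr /=.
rewrite (fgNl fg_bil) (fgZl fg_bil) (fgZr fg_bil fg_sym).
have [op|nop] := opposite_or_not alpha gamma.
  by rewrite (cartan_weight_opposite cc op) mulNr.
by rewrite (fg_roots_orth rx rz nop) !mulr0 oppr0.
Qed.

Lemma invariant_root_cartans : invariant_at (N x) c c'.
Proof.
by rewrite /invariant_at (bd_root_cartan cc rx) bd_cartan // d_form0r // d_form_root_cartan.
Qed.

Lemma invariant_cartan_root_cartan : invariant_at c (N y) c'.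
Proof.
by rewrite /invariant_at (bd_cartan_root cc ry) (bd_root_cartan cc' ry)
  d_form_root_cartan // d_form_cartan_root.
Qed.
End RootTriples.

Lemma invariant_cartans c c' c'' : cartan hh c -> cartan hh c' -> cartan hh c'' ->
  invariant_at c c' c''.
Proof.
by move=> cc cc' cc''; rewrite /invariant_at !bd_cartan // d_form0l // d_form0r.
Qed.

Lemma invariant_generators a b c : dgen a -> dgen b -> dgen c ->
  invariant_at a b c.
Proof.
move=> ga gb gc; have [ia ib] := (in_d_generator ga, in_d_generator gb).
have ic := in_d_generator gc.
case: ga => [[x [al [rx Ea]]]|ca]; case: gb => [[y [be [ry Eb]]]|cb];
  case: gc => [[z [gm [rz Ec]]]|cc]; subst.
- exact: (invariant_roots rx ry rz).
- exact: (invariant_roots_cartan rx ry cc).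
- exact: (invariant_root_cartan_root rx rz cb).
- exact: (invariant_root_cartans rx cb cc).
- exact/invariant_at_rev/(invariant_roots_cartan rz ry ca).
- exact: (invariant_cartan_root_cartan ry ca cc).
- exact/invariant_at_rev/(invariant_root_cartans rz cb ca).
- exact: invariant_cartans.
Qed.

Lemma invariant_lspan a b c : lspan dgen a -> lspan dgen b ->
  lspan dgen c -> invariant_at a b c.
Proof.
have span_d a' : lspan dgen a' -> ind a' by apply: lspan_in_d.
move=> sa sb; have [ia ib] := (span_d _ sa, span_d _ sb).
have inv_a b' c' : dgen b' -> dgen c' ->
    forall a', lspan dgen a' -> invariant_at a' b' c'.
  move=> gb gc; have ib' := in_d_generator gb.
  apply: (eq_on_lspan (L1 := fun a' => D (bd a' b') c')
                      (L2 := fun a' => D a' (bd b' c'))) => /=.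
  - by rewrite bd0l // d_form0l.
  - by rewrite d_form0l.
  - by move=> r y x /in_d_generator iy /span_d ix; rewrite bd_linl // d_form_linl.
  - by move=> r y x _ _; rewrite d_form_linl.
  - by move=> y gy; apply: invariant_generators.
have inv_b c' : dgen c' -> forall b', lspan dgen b' ->
    invariant_at a b' c'.
  move=> gc; have ic' := in_d_generator gc.
  apply: (eq_on_lspan (L1 := fun b' => D (bd a b') c')
                      (L2 := fun b' => D a (bd b' c'))) => /=.
  - by rewrite bd0r // d_form0l.
  - by rewrite bd0l // d_form0r.
  - by move=> r y x /in_d_generator iy /span_d ix; rewrite bd_linr // d_form_linl.
  - by move=> r y x /in_d_generator iy /span_d ix; rewrite bd_linl // d_form_linr.
  - by move=> y gy; apply: inv_a.
apply: (eq_on_lspan (L1 := fun c' => D (bd a b) c')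
                    (L2 := fun c' => D a (bd b c'))) => /=.
- by rewrite d_form0r.
- by rewrite bd0r // d_form0r.
- by move=> r y x _ _; rewrite d_form_linr.
- by move=> r y x /in_d_generator iy /span_d ix; rewrite bd_linr // d_form_linr.
- by move=> y gy; apply: inv_b.
Qed.

End Invariance.

Theorem mainTheorem2
  (n : nat) (C : 'M[int]_n) (d : 'I_n -> nat)
  (F : numClosedFieldType) (G : lmodType F) (bg : G -> G -> G)
  (hh e f : 'I_n -> G) (fg : G -> G -> F) (u : 'M[F]_n)
  (K : lmodType F) (phi : G -> K) (phiinv : K -> G)
  (bd : dT G K -> dT G K -> dT G K) :
  (0 < n)%N -> gcm C -> indecomposable C -> sym_posdef_symmetrizer C d ->
  lie_bracket bg -> chevalley_serre C bg hh e f -> lie_generated bg hh e f ->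
  lin_indep hh ->
  g_invariant_form C bg hh e f d fg ->
  skew_symmetric u ->
  phi_iso hh phi phiinv ->
  d_bracket bg hh fg u phi bd ->
  (forall r a b c, in_d bg hh a -> in_d bg hh b -> in_d bg hh c ->
     d_form hh fg u phiinv (r *: a + b) c
     = r * d_form hh fg u phiinv a c + d_form hh fg u phiinv b c) /\
  (forall a b, in_d bg hh a -> in_d bg hh b ->
     d_form hh fg u phiinv a b = d_form hh fg u phiinv b a) /\
  (forall a b c, in_d bg hh a -> in_d bg hh b -> in_d bg hh c ->
     d_form hh fg u phiinv (bd a b) c = d_form hh fg u phiinv a (bd b c)).
Proof.
move=> _ _ _ symmetrizer bg_lie serre generated _ fg_inv u_skew phi_h bd_d.
have [fg_bil [fg_sym _]] := fg_inv.
have phiinv_linear := phiinv_lin phi_h.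
split; [|split].
- by move=> r a b c _ _ _; apply: d_form_linl.
- by move=> a b _ _; apply: d_formC.
- move=> a b c /in_d_lspan sa /in_d_lspan sb /in_d_lspan sc.
  exact: (invariant_lspan bg_lie serre generated symmetrizer fg_inv u_skew phi_h bd_d).
Qed.
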